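(* For a liner $X$ the following are equivalent: (1) $X$ is weakly modular; (2) $X$ is ranked and weakly regular; (3) $X$ is ranked and for any planes $P,\Pi\subseteq X$ with $\|P\cup\Pi\|=4$, the intersection $P\cap\Pi$ is not a singleton.
   Context: A liner is a set $X$ of points with a family of subsets called lines such that any two distinct points lie in a unique line and every line contains at least two points. For distinct $x,y$, $\overline{xy}$ is the line through them. A set is flat if it contains $\overline{xy}$ for all its distinct points $x,y$; $\overline A$ is the smallest flat containing $A$. The rank $\|A\|$ is the smallest cardinality of $B\subseteq X$ with $A\subseteq\overline B$. A plane is a flat of rank $3$. $X$ is ranked if any two flats $A\subseteq B$ with $\|A\|=\|B\|<\omega$ are equal. $X$ is weakly modular if $\|A\cap B\|+\|A\cup B\|=\|A\|+\|B\|$ for all flats $A,B\subseteq X$ with $A\cap B\neq\varnothing$. $X$ is weakly regular if for every flat $A\subseteq X$ and points $a\in A$, $b\in X\setminus A$ we have $\overline{A\cup\{b\}}=\bigcup_{x\in A}\overline{\{a,b,x\}}$. *)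

From mathcomp Require Import all_boot.
From mathcomp Require Import boolp classical_sets functions cardinality.
Set Implicit Arguments. Unset Strict Implicit. Unset Printing Implicit Defensive.
Local Open Scope classical_set_scope.
Local Open Scope card_scope.

Section Liner.
Variable X : Type.

Definition is_liner (L : set (set X)) : Prop :=
  (forall x y : X, x <> y ->
     exists l, [/\ L l, l x, l y &
       forall l', L l' -> l' x -> l' y -> l' = l]) /\
  (forall l, L l -> exists x y, [/\ x <> y, l x & l y]).

(* the line through distinct x, y : the unique line containing both *)
Definition line_through (L : set (set X)) (x y : X) : set X :=
  \bigcup_(l in [set l | [/\ L l, l x & l y]]) l.

Definition flat (L : set (set X)) (A : set X) : Prop :=
  forall x y, A x -> A y -> x <> y -> line_through L x y `<=` A.

Definition hull (L : set (set X)) (A : set X) : set X :=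
  [set z | forall F, flat L F -> A `<=` F -> F z].

(* B is a generating set of A of least cardinality, i.e. its cardinality is
   the rank ||A|| (smallest cardinality of B with A ⊆ hull B) *)
Definition min_gen (L : set (set X)) (A B : set X) : Prop :=
  A `<=` hull L B /\ (forall C, A `<=` hull L C -> B #<= C).

Definition has_rank (L : set (set X)) (A : set X) (n : nat) : Prop :=
  exists B, min_gen L A B /\ B #= `I_n.

(* cardinal sum of two subsets of X: cardinality of their disjoint union *)
Definition dsum (A B : set X) : set (X + X) :=
  (inl @` A) `|` (inr @` B).

Definition plane (L : set (set X)) (P : set X) : Prop :=
  flat L P /\ has_rank L P 3.

Definition ranked (L : set (set X)) : Prop :=
  forall A B n, flat L A -> flat L B -> A `<=` B ->
    has_rank L A n -> has_rank L B n -> A = B.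

(* ||A ∩ B|| + ||A ∪ B|| = ||A|| + ||B|| as cardinals *)
Definition weakly_modular (L : set (set X)) : Prop :=
  forall A B, flat L A -> flat L B -> A `&` B !=set0 ->
    exists G1 G2 G3 G4,
      [/\ min_gen L (A `&` B) G1, min_gen L (A `|` B) G2,
          min_gen L A G3, min_gen L B G4 &
          dsum G1 G2 #= dsum G3 G4].

Definition weakly_regular (L : set (set X)) : Prop :=
  forall A a b, flat L A -> A a -> ~ A b ->
    hull L (A `|` [set b]) = \bigcup_(x in A) hull L [set a; b; x].

End Liner.

From mathcomp Require Import all_boot zify.
From mathcomp Require Import boolp classical_sets functions cardinality.
Set Implicit Arguments. Unset Strict Implicit. Unset Printing Implicit Defensive.
Local Open Scope classical_set_scope.
Local Open Scope card_scope.

(* In a ranked liner, adding a point outside a flat raises its rank by one,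
   which yields the exchange property: the flat hull is the closure operator
   of a finitary matroid, so every flat has an independent basis extending
   any given independent subset, and no generating set is smaller than an
   independent set.
   (1) -> (2), (3): weak modularity for a flat [A] and a line [ab] with [a] in
   [A] and [b] outside shows that [A + b] has larger rank, hence rankedness;
   two planes meeting in a single point would give 1 + 4 = 3 + 3.
   (3) -> (2): the union of the planes [<a,b,x>], [x] in [A], is flat.  A point
   [w] on a line joining two of them lies in [<a,b,x,y>] with [x, y] in [A];
   unless [w] is already covered, the planes [<a,b,w>] and [<a,x,y>] (inside
   [A]) span a flat of rank 4, so by (3) they share a point [x'' <> a], and
   then [<a,b,w> = <a,b,x''>].
   (2) -> (1): weak regularity gives the modular law
   [<A + F> & B = <(A & B) + F>] for flats [A], [B] and [F] included in [B].
   Hence if a basis [G] of [A & B] is extended to bases [IA], [IB] of [A], [B],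
   then [IA + (IB \ G)] is a basis of [A + B], and the cardinal identity
   follows by matching [G + (IA + (IB \ G))] with [IA + IB]. *)

Lemma card_le_inj T U (A : set T) (B : set U) (f : T -> U) :
  set_fun A B f -> {in A &, injective f} -> A #<= B.
Proof.
move=> fAB finj; apply/card_subP; exists (f @` A); first exact: inj_card_eq.
by move=> _ [x Ax <-]; apply: fAB.
Qed.

Lemma card_le_nat_inj T (A : set T) (B : set nat) : A #<= B ->
  exists2 f : T -> nat, set_fun A B f & {in A &, injective f}.
Proof. by move=> /pcard_leP/injfunPex[f ff fi]; exists f. Qed.

Lemma card_le_I0 T (A : set T) : A #<= `I_0 -> A = set0.
Proof.
by move=> /card_le_nat_inj[f fA _]; apply/seteqP; split => // x /fA.
Qed.

Lemma card_le_I1 T (A : set T) x y : A #<= `I_1 -> A x -> A y -> x = y.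
Proof.
move=> /card_le_nat_inj[f fA fi] Ax Ay; apply: fi; rewrite ?inE //.
by move: (fA x Ax) (fA y Ay); rewrite /= !ltnS !leqn0 => /eqP-> /eqP->.
Qed.

Lemma card_set1_le T (a : T) : [set a] #<= `I_1.
Proof. by have /card_eqPle[] := @card_set1 _ a. Qed.

Lemma card_setU1_le T (A : set T) p n : A #<= `I_n -> p |` A #<= `I_n.+1.
Proof.
move=> /card_le_nat_inj[f fA fi].
pose g x := if `[< x = p >] then n else f x.
apply: (@card_le_inj _ _ _ _ g) => [x|x y]; rewrite /g.
  case: asboolP => [_ _ /=|xp [/xp[]|/fA /= fxn]]; [exact: ltnSn|exact: ltnW].
rewrite !inE; case: asboolP => [->|xp]; case: asboolP => [->//|yp].
- by move=> _ [//|/fA /= + e]; rewrite -e ltnn.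
- by move=> [//|/fA /= + _ e]; rewrite e ltnn.
- by move=> [//|Ax] [//|Ay]; apply: fi; rewrite inE.
Qed.

Lemma card_setU1r_le T (A : set T) p n : A #<= `I_n -> A `|` [set p] #<= `I_n.+1.
Proof. by rewrite setUC; exact: card_setU1_le. Qed.

Lemma infinite_card_ge T (C : set T) n : ~ finite_set C -> `I_n #<= C.
Proof. by move=> /infiniteP; apply: card_le_trans; exact: subset_card_le. Qed.

Lemma dsum_card T (A B : set T) m n : A #= `I_m -> B #= `I_n ->
  dsum A B #= `I_(m + n).
Proof.
move=> /card_set_bijP[f [fA fi fs]] /card_set_bijP[g [gA gi gs]].
pose h (s : T + T) := match s with inl x => f x | inr y => m + g y end.
have hi : {in dsum A B &, injective h}.
  move=> [x|x] [y|y]; rewrite !inE /dsum /=.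
  - move=> [[x' Ax' [<-]]|[? _ //]] [[y' Ay' [<-]]|[? _ //]] e.
    by congr inl; apply: fi; rewrite ?inE.
  - move=> [[x' Ax' [<-]]|[? _ //]] [[? _ //]|[y' Ay' [<-]]] e.
    by have := fA x' Ax'; rewrite /= e ltnNge leq_addr.
  - move=> [[? _ //]|[x' Ax' [<-]]] [[y' Ay' [<-]]|[? _ //]] e.
    by have := fA y' Ay'; rewrite /= -e ltnNge leq_addr.
  - move=> [[? _ //]|[x' Ax' [<-]]] [[? _ //]|[y' Ay' [<-]]] /addnI e.
    by congr inr; apply: gi; rewrite ?inE.
rewrite card_eq_sym; apply: card_eq_trans (inj_card_eq hi).
suff -> : h @` dsum A B = `I_(m + n) by exact: card_eqxx.
apply/seteqP; split.
  move=> _ [s [[x Ax <-]|[y By <-]] <-] /=.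
    by apply: leq_trans (fA x Ax) _; exact: leq_addr.
  by rewrite ltn_add2l; exact: gA.
move=> k /= kmn; have [km|mk] := ltnP k m.
  by have [x Ax <-] := fs k km; exists (inl x) => //; left; exists x.
have [|y By gy] := gs (k - m); first by rewrite /= ltn_subLR.
by exists (inr y); [right; exists y|rewrite /= gy subnKC].
Qed.

Lemma dsum_card_eq_nat T (G1 G2 G3 G4 : set T) a b c d :
  G1 #= `I_a -> G2 #= `I_b -> G3 #= `I_c -> G4 #= `I_d ->
  dsum G1 G2 #= dsum G3 G4 -> a + b = c + d.
Proof.
move=> h1 h2 h3 h4 e; apply/card_eq_II.
apply: card_eq_trans (card_esym (dsum_card h1 h2)) _.
exact: card_eq_trans e (dsum_card h3 h4).
Qed.

Lemma dsum_modular T (G I J : set T) : G `<=` I -> G `<=` J -> I `&` J `<=` G ->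
  dsum G (I `|` (J `\` G)) #= dsum I J.
Proof.
move=> GI GJ IJG.
(* the identity, except that points of [I \ G] move from the right summand
   to the left one *)
pose h (s : T + T) := match s with
  | inl t => inl t
  | inr t => if `[< G t >] then inr t else if `[< I t >] then inl t else inr t end.
pose pr (s : T + T) := match s with inl t => t | inr t => t end.
have prh s : pr (h s) = pr s.
  by case: s => [t|t] //=; case: asboolP => _ //; case: asboolP.
have hi : {in dsum G (I `|` (J `\` G)) &, injective h}.
  move=> [x|x] [y|y]; rewrite !inE => Dx Dy e; have := congr1 pr e;
    rewrite !prh /= => exy; subst y => //.
  - move: e => /=; case: asboolP => Gy //; exfalso; apply: Gy.
    by case: Dx => [[x' Gx' [<-]]|[? _ //]].
  - move: e => /=; case: asboolP => Gy //; exfalso; apply: Gy.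
    by case: Dy => [[x' Gx' [<-]]|[? _ //]].
suff <- : h @` dsum G (I `|` (J `\` G)) = dsum I J.
  by rewrite card_eq_sym; exact: inj_card_eq hi.
apply/seteqP; split.
  move=> _ [s [[x Gx <-]|[x Dx <-]] <-] /=; first by left; exists x => //; exact: GI.
  case: asboolP => Gx; first by right; exists x => //; exact: GJ.
  case: asboolP => Ix; first by left; exists x.
  by case: Dx => [//|[Jx _]]; right; exists x.
move=> _ [[t It <-]|[t Jt <-]].
  have [Gt|nGt] := pselect (G t); first by exists (inl t) => //; left; exists t.
  exists (inr t); first by right; exists t => //; left.
  by rewrite /= (asboolF nGt) (asboolT It).
have [Gt|nGt] := pselect (G t).
  exists (inr t); first by right; exists t => //; left; exact: GI.
  by rewrite /= (asboolT Gt).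
have nIt : ~ I t by move=> It; apply: nGt; exact: IJG.
exists (inr t); first by right; exists t => //; right.
by rewrite /= (asboolF nGt) (asboolF nIt).
Qed.

Lemma finite_set_ind T (P : set T -> Prop) :
  P set0 -> (forall F x, finite_set F -> P F -> P (x |` F)) ->
  forall F, finite_set F -> P F.
Proof.
move=> P0 PS F /finite_set_leP[n]; elim: n F => [|n IH] F Fn.
  by rewrite (card_le_I0 Fn).
have [f fF fi] := card_le_nat_inj Fn.
pose F' := [set x | F x /\ f x < n].
have F'n : F' #<= `I_n.
  apply: (@card_le_inj _ _ _ _ f) => [x []//|x y]; rewrite !inE => -[Fx _] [Fy _].
  by apply: fi; rewrite inE.
have fF' : finite_set F' by apply/finite_set_leP; exists n.
have [[x0 [Fx0 fx0]]|nx] := pselect (exists x, F x /\ f x = n).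
  suff -> : F = x0 |` F' by apply: PS => //; apply: IH.
  apply/seteqP; split => [x Fx|x [->//|[]//]].
  have := fF x Fx; rewrite /= ltnS leq_eqVlt => /orP[/eqP fxn|fxn]; last by right.
  by left; apply: fi; rewrite ?inE // fxn fx0.
suff -> : F = F' by apply: IH.
apply/seteqP; split => [x Fx|x []//]; split => //.
have := fF x Fx; rewrite /= ltnS leq_eqVlt => /orP[/eqP fxn|//].
by exfalso; apply: nx; exists x.
Qed.

Lemma finite_sub_chain T (I0 : set T) (F : set (set T)) : total_on F subset ->
  forall K, finite_set K -> K `<=` I0 `|` \bigcup_(J in F) J ->
  K `<=` I0 \/ exists2 J, F J & K `<=` I0 `|` J.
Proof.
move=> Ftot; apply: finite_set_ind; first by left.
move=> K x _ IH xK; have := IH (fun t Kt => xK t (or_intror Kt)).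
have [xI0|[J1 FJ1 xJ1]] := xK x (or_introl erefl).
  case=> [KI0|[J FJ KJ]]; first by left => t [->|/KI0].
  by right; exists J => // t [->|/KJ //]; left.
case=> [KI0|[J FJ KJ]].
  by right; exists J1 => // t [->|/KI0 ?]; [right|left].
right; have [J1J|JJ1] := Ftot J1 J FJ1 FJ.
  by exists J => // t [->|/KJ //]; right; exact: J1J.
by exists J1 => // t [->|/KJ [?|/JJ1 ?]]; [right|left|right].
Qed.

Definition matroid_closure (X : Type) (cl : set X -> set X) := [/\
  forall A, A `<=` cl A,
  forall A B, A `<=` B -> cl A `<=` cl B,
  forall A B, A `<=` cl B -> cl A `<=` cl B,
  forall A z, cl A z -> exists F, [/\ finite_set F, F `<=` A & cl F z] &
  forall S x y, cl (x |` S) y -> ~ cl S y -> cl (y |` S) x].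

Section MatroidClosure.
Variables (X : Type) (cl : set X -> set X).
Hypothesis clP : matroid_closure cl.

Let cl_ext A : A `<=` cl A.
Proof. by case: clP => + _ _ _ _; apply. Qed.

Let cl_mono A B : A `<=` B -> cl A `<=` cl B.
Proof. by case: clP => _ + _ _ _; apply. Qed.

Let cl_sub_cl A B : A `<=` cl B -> cl A `<=` cl B.
Proof. by case: clP => _ _ + _ _; apply. Qed.

Let cl_finitary A z : cl A z -> exists F, [/\ finite_set F, F `<=` A & cl F z].
Proof. by case: clP => _ _ _ + _; apply. Qed.

Let cl_exchange S x y : cl (x |` S) y -> ~ cl S y -> cl (y |` S) x.
Proof. by case: clP => _ _ _ _; apply. Qed.

Definition independent (I : set X) := forall z, I z -> ~ cl (I `\ z) z.

Lemma independent_sub I J : I `<=` J -> independent J -> independent I.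
Proof.
move=> IJ iJ z Iz hz; apply: (iJ z (IJ z Iz)); apply: cl_mono hz.
by move=> t [It tz]; split => //; exact: IJ.
Qed.

Lemma independent0 : independent set0.
Proof. by move=> z []. Qed.

Lemma independent_finite I :
  (forall K, finite_set K -> K `<=` I -> independent K) -> independent I.
Proof.
move=> iK z Iz /cl_finitary[F [fF FI hF]].
have KI : z |` F `<=` I by move=> t [->//|/FI[]].
apply: (iK _ _ KI z (or_introl erefl)).
  by rewrite finite_setU; split => //; exact: finite_set1.
apply: cl_mono hF => t Ft; have [_ tz] := FI t Ft; by split; [right|].
Qed.

Lemma independent_chainU I0 (F : set (set X)) : total_on F subset ->
  independent I0 -> (forall J, F J -> independent (I0 `|` J)) ->
  independent (I0 `|` \bigcup_(J in F) J).
Proof.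
move=> Ftot iI0 iJ; apply: independent_finite => K fK /(finite_sub_chain Ftot fK).
by case=> [KI0|[J FJ KJ]]; [exact: independent_sub iI0|exact: independent_sub (iJ J FJ)].
Qed.

(* For [z] in [I], induction on a finite [F] included in [H]: if adding [h]
   to [F] made [z] spanned by [(I \ z) `|` F], exchange would put [h] in the
   closure of [I `|` (H \ h)]. *)
Lemma independent_union I H : independent I ->
  (forall h, H h -> ~ cl (I `|` (H `\ h)) h) -> independent (I `|` H).
Proof.
move=> iI hH z [Iz|Hz] hz; last first.
  by apply: (hH z Hz); apply: cl_mono hz => t [[It|Ht] tz]; [left|right].
have key : forall F, finite_set F -> F `<=` H -> ~ cl ((I `\ z) `|` F) z.
  apply: finite_set_ind => [_|F h _ IH FhH hh]; first by rewrite setU0; exact: iI.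
  have FH : F `<=` H by move=> t Ft; apply: FhH; right.
  have [Fh|nFh] := pselect (F h).
    by apply: (IH FH); apply: cl_mono hh => t [It|[->|Ft]]; [left|right|right].
  have : cl (h |` ((I `\ z) `|` F)) z by rewrite setUCA.
  move=> /cl_exchange /(_ (IH FH)) hx.
  apply: (hH h (FhH h (or_introl erefl))); apply: cl_mono hx.
  move=> t [->|[[It _]|Ft]]; [by left|by left|right].
  by split; [exact: FH|move=> th; apply: nFh; rewrite -th].
have [G [fG GIH hG]] := cl_finitary hz.
apply: (key (G `&` H) (finite_setIl H fG)); first by move=> t [].
apply: cl_mono hG => t Gt; have [[It|Ht] tz] := GIH t Gt; by [left|right].
Qed.

Lemma independent_add I a : independent I -> ~ cl I a -> independent (a |` I).
Proof.
move=> iI na; rewrite setUC; apply: independent_union => // h ->.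
by rewrite setDv setU0.
Qed.

Lemma independent_meet_cl I G : independent I -> G `<=` I -> I `&` cl G `<=` G.
Proof.
move=> iI GI t [It Gt]; apply: contrapT => nGt; apply: (iI t It).
by apply: cl_mono Gt => u Gu; split; [exact: GI|move=> /= ut; apply: nGt; rewrite -ut].
Qed.

Lemma independent_extend I0 A : independent I0 -> I0 `<=` A ->
  exists I, [/\ I0 `<=` I, I `<=` A, independent I & A `<=` cl I].
Proof.
move=> iI0 I0A.
have [|J [[JA iJ] Jmax]] := @Zorn_bigcup _ [set J | J `<=` A /\ independent (I0 `|` J)].
  move=> F FP Ftot; split; first by move=> z [J /FP[JA _] /JA].
  by apply: independent_chainU => // J /FP[].
exists (I0 `|` J); split => //; first by move=> t [/I0A|/JA].
move=> a Aa; apply: contrapT => na; apply: (Jmax (a |` J)).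
  split; first by move=> t Jt; right.
  by move=> /(_ a (or_introl erefl)) Ja; apply: na; apply: cl_ext; right.
by split; [move=> t [->|/JA]|rewrite setUCA; exact: independent_add].
Qed.

Section IndependentCard.
Variables B C : set X.
Hypothesis indB : independent B.
Hypothesis BC : B `<=` cl C.

Let dom (R : set (X * X)) b := exists c, R (b, c).
Let rng (R : set (X * X)) c := exists b, R (b, c).

(* [R] injectively matches part of [B] into [C] so that replacing the matched
   points of [B] by their partners keeps [B] independent; a partner lying in
   [B] must itself be matched. *)
Let matching R := [/\ (forall b c, R (b, c) -> B b /\ C c),
   (forall b c c', R (b, c) -> R (b, c') -> c = c'),
   (forall b b' c, R (b, c) -> R (b', c) -> b = b'),
   (forall b c, R (b, c) -> B c -> dom R c) &
   independent ((B `\` dom R) `|` rng R)].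

Let matching_chain (F : set (set (X * X))) : F `<=` matching ->
  total_on F subset -> matching (\bigcup_(R in F) R).
Proof.
move=> FP Ftot.
have common R1 R2 p1 p2 : F R1 -> F R2 -> R1 p1 -> R2 p2 ->
    exists R, [/\ F R, R p1 & R p2].
  move=> F1 F2 h1 h2; have [s|s] := Ftot R1 R2 F1 F2.
    by exists R2; split => //; exact: s.
  by exists R1; split => //; exact: s.
split.
- by move=> b c [R /FP[+ _ _ _ _]]; apply.
- move=> b c c' [R1 F1 h1] [R2 F2 h2].
  by have [R [/FP[_ H _ _ _] h1' h2']] := common _ _ _ _ F1 F2 h1 h2; exact: H h1' h2'.
- move=> b b' c [R1 F1 h1] [R2 F2 h2].
  by have [R [/FP[_ _ H _ _] h1' h2']] := common _ _ _ _ F1 F2 h1 h2; exact: H h1' h2'.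
- move=> b c [R FR Rbc] Bc; have [_ _ _ /(_ b c Rbc Bc)[c' h] _] := FP R FR.
  by exists c'; exists R.
have -> : rng (\bigcup_(R in F) R) = \bigcup_(J in rng @` F) J.
  apply/seteqP; split => [t [b [R FR h]]|t [_ [R FR <-] [b h]]].
    by exists (rng R); [exists R|exists b].
  by exists b; exists R.
apply: independent_chainU => [_ _ [R1 F1 <-] [R2 F2 <-]||_ [R FR <-]].
- by have [s|s] := Ftot R1 R2 F1 F2; [left|right] => t [b /s h]; exists b.
- by apply: independent_sub indB => t [].
- have [_ _ _ _] := FP R FR; apply: independent_sub => t [[Bt nd]|rt]; last by right.
  by left; split => // -[c h]; apply: nd; exists c; exists R.
Qed.

Let matching_extend R b : matching R -> B b -> ~ dom R b ->
  exists c, matching (R `|` [set (b, c)]).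
Proof.
move=> [R1 R2 R3 R4 iR] Bb nd.
set I := (B `\` dom R) `|` rng R.
have rngI : rng R `<=` I `\ b.
  move=> t rt; split; first by right.
  by move=> /= tb; subst t; case: rt => b' /R4 /(_ Bb).
have [c [Cc nc]] : exists c, C c /\ ~ cl (I `\ b) c.
  apply: contrapT => H; apply: (iR b (or_introl (conj Bb nd))).
  by apply: cl_sub_cl (BC Bb) => c Cc; apply: contrapT => nc; apply: H; exists c.
have nRc : ~ rng R c by move/rngI/cl_ext.
exists c; split.
- by move=> b1 c1 [/R1 //|[-> ->]].
- move=> b1 c1 c2 [h1|[e1 e2]] [h2|[e1' e2']].
  + exact: R2 h1 h2.
  + by case: nd; rewrite -e1'; exists c1.
  + by case: nd; rewrite -e1; exists c2.
  + by rewrite e2 e2'.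
- move=> b1 b2 c1 [h1|[e1 e2]] [h2|[e1' e2']].
  + exact: R3 h1 h2.
  + by case: nRc; rewrite -e2'; exists b1.
  + by case: nRc; rewrite -e2; exists b2.
  + by rewrite e1 e1'.
- move=> b1 c1 [h1 Bc1|[e1 e2] Bc]; last subst b1 c1.
    by have [c' ?] := R4 _ _ h1 Bc1; exists c'; left.
  have [->|cb] := pselect (c = b); first by exists b; right.
  have [[c' ?]|ndc] := pselect (dom R c); first by exists c'; left.
  by case: nc; apply: cl_ext; split => //; left.
apply: (@independent_sub _ (c |` (I `\ b))); last first.
  by apply: independent_add => //; apply: independent_sub iR => t [].
move=> t [[Bt nd']|[b1 [h1|[_ ->]]]]; [|by right; apply: rngI; exists b1|by left].
right; split; first by left; split => // -[c' h]; apply: nd'; exists c'; left.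
by move=> tb; apply: nd'; exists c; right; rewrite tb.
Qed.

Lemma independent_card_le : B #<= C.
Proof.
have [R [mR Rmax]] := Zorn_bigcup matching_chain.
have full b : B b -> dom R b.
  move=> Bb; apply: contrapT => nd; have [c mRc] := matching_extend mR Bb nd.
  apply: (Rmax _ _ mRc); split; first by move=> p Rp; left.
  by move=> /(_ (b, c) (or_intror erefl)) Rbc; apply: nd; exists c.
have [R1 _ R3 _ _] := mR.
have /choice[f hf] : forall b, exists c, B b -> R (b, c).
  by move=> b; have [/full[c Rbc]|nBb] := pselect (B b); [exists c|exists b].
apply: (@card_le_inj _ _ _ _ f) => [b /hf /R1[]//|x y]; rewrite !inE => Bx By e.
by apply: (R3 x y (f x) (hf x Bx)); rewrite e; exact: hf.
Qed.

End IndependentCard.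

End MatroidClosure.

Section Hull.
Variables (X : Type) (L : set (set X)).

Lemma subset_hull (A : set X) : A `<=` hull L A.
Proof. by move=> x Ax F _; apply. Qed.

Lemma hull_min (A F : set X) : flat L F -> A `<=` F -> hull L A `<=` F.
Proof. by move=> fF AF z; apply. Qed.

Lemma flat_hull (A : set X) : flat L (hull L A).
Proof.
move=> x y hx hy xy z zl F fF AF.
exact: fF x y (hx F fF AF) (hy F fF AF) xy z zl.
Qed.

Lemma hull_sub_hull (A B : set X) : A `<=` hull L B -> hull L A `<=` hull L B.
Proof. by move=> AB; apply: hull_min => //; exact: flat_hull. Qed.

Lemma hull_mono (A B : set X) : A `<=` B -> hull L A `<=` hull L B.
Proof. by move=> AB; apply: hull_sub_hull => z /AB; exact: subset_hull. Qed.

Lemma hull_flatE (F : set X) : flat L F -> hull L F = F.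
Proof. by move=> fF; apply/seteqP; split; [exact: hull_min|exact: subset_hull]. Qed.

Lemma hullUl (A B : set X) : hull L (hull L A `|` B) = hull L (A `|` B).
Proof.
apply/seteqP; split; last by apply: hull_mono => z [/subset_hull|]; [left|right].
apply: hull_sub_hull => z [|Bz]; last by apply: subset_hull; right.
by apply: hull_mono; exact: subsetUl.
Qed.

Lemma hullUr (A B : set X) : hull L (A `|` hull L B) = hull L (A `|` B).
Proof. by rewrite setUC hullUl setUC. Qed.

Lemma hull0 : hull L set0 = set0.
Proof. by apply: hull_flatE => x y []. Qed.

Lemma hull1 (a : X) : hull L [set a] = [set a].
Proof. by apply: hull_flatE => x y -> -> []. Qed.

Lemma hull_finitary (A : set X) z : hull L A z ->
  exists F, [/\ finite_set F, F `<=` A & hull L F z].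
Proof.
pose U := [set z | exists F, [/\ finite_set F, F `<=` A & hull L F z]].
apply: (@hull_min A U) => [x y [F1 [f1 s1 h1]] [F2 [f2 s2 h2]] xy w wl|a Aa].
  exists (F1 `|` F2); split; first by rewrite finite_setU.
    by move=> t [/s1|/s2].
  apply: (flat_hull (x:=x) (y:=y)) => //.
    exact: hull_mono (@subsetUl _ F1 F2) _ h1.
  exact: hull_mono (@subsetUr _ F1 F2) _ h2.
by exists [set a]; split; [exact: finite_set1|move=> t ->|rewrite hull1].
Qed.

Lemma hullU1_id (S : set X) x : hull L S x -> hull L (x |` S) = hull L S.
Proof.
move=> Sx; apply/seteqP; split; last by apply: hull_mono => z Sz; right.
by apply: hull_sub_hull => z [->|/subset_hull].
Qed.

Hypothesis HL : is_liner L.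

Lemma line_flat l : L l -> flat L l.
Proof.
move=> Ll x y lx ly xy z [l' [Ll' l'x l'y] l'z].
have [l0 [_ _ _ u]] := HL.1 x y xy.
by rewrite (u l) // -(u l').
Qed.

Lemma hull2_line l a b : L l -> l a -> l b -> a <> b -> hull L [set a; b] = l.
Proof.
move=> Ll la lb ab; apply/seteqP; split.
  by apply: hull_min; [exact: line_flat|move=> z [->|->]].
move=> z lz F fF abF.
by apply: (fF a b (abF a (or_introl erefl)) (abF b (or_intror erefl)) ab); exists l.
Qed.

Lemma hull2_swap a b c : a <> b -> a <> c -> hull L [set a; b] c ->
  hull L [set a; c] = hull L [set a; b].
Proof.
move=> ab ac; have [l [Ll la lb _]] := HL.1 a b ab.
by rewrite (hull2_line Ll la lb ab) => lc; rewrite (hull2_line Ll la lc ac).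
Qed.

End Hull.
Arguments flat_hull {X L A}.

Section Rank.
Variables (X : Type) (L : set (set X)).

Definition rank_leq (A : set X) n := exists B, A `<=` hull L B /\ B #<= `I_n.

Lemma has_rankP A n :
  has_rank L A n <-> rank_leq A n /\ forall m, rank_leq A m -> n <= m.
Proof.
split=> [[B [[AB Bmin] Bn]]|[[B [AB Bn]] nmin]].
  have /card_eqPle[Bn1 Bn2] := Bn; split; first by exists B.
  move=> m [C [AC Cm]]; rewrite -card_le_II.
  by apply: card_le_trans Bn2 _; apply: card_le_trans Cm; exact: Bmin.
have /finite_setP[k Bk] : finite_set B by apply: card_le_finite Bn _; exists n.
have kn : k <= n by rewrite -card_le_II -(card_le_eql Bk).
have nk : n <= k by apply: nmin; exists B; split => //; have /card_eqPle[] := Bk.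
have {kn nk} ekn : k = n by apply/eqP; rewrite eqn_leq kn nk.
subst k; exists B; split => //; split => // C AC.
rewrite (card_le_eql Bk); have [/finite_setP[j Cj]|] := pselect (finite_set C).
  have nj : n <= j by apply: nmin; exists C; split => //; have /card_eqPle[] := Cj.
  by rewrite (card_le_eqr Cj) card_le_II.
exact: infinite_card_ge.
Qed.

Lemma has_rank_leq A n : rank_leq A n -> exists m, has_rank L A m /\ m <= n.
Proof.
move=> An; have ex : exists m, `[< rank_leq A m >] by exists n; apply/asboolP.
case: (ex_minnP ex) => m /asboolP Am mmin.
exists m; split; last by apply: mmin; apply/asboolP.
by apply/has_rankP; split => // j Aj; apply: mmin; exact/asboolP.
Qed.

Lemma has_rank_uniq A n m : has_rank L A n -> has_rank L A m -> n = m.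
Proof.
move=> /has_rankP[An nmin] /has_rankP[Am mmin].
by apply/eqP; rewrite eqn_leq nmin // mmin.
Qed.

Lemma min_gen_card A n G : has_rank L A n -> min_gen L A G -> G #= `I_n.
Proof.
move=> [B [[AB Bmin] Bn]] [AG Gmin]; rewrite card_eq_sym.
by apply: card_eq_trans (card_esym Bn) (Cantor_Bernstein (Bmin _ AG) (Gmin _ AB)).
Qed.

Lemma rank_leq_sub A B n : A `<=` B -> rank_leq B n -> rank_leq A n.
Proof. by move=> AB [C [BC Cn]]; exists C; split => //; exact: subset_trans BC. Qed.

Lemma rank_leq_hull A n : rank_leq (hull L A) n <-> rank_leq A n.
Proof.
split; first by apply: rank_leq_sub; exact: subset_hull.
by move=> [C [AC Cn]]; exists C; split => //; exact: hull_sub_hull.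
Qed.

Lemma rank_leq_card S n : S #<= `I_n -> rank_leq S n.
Proof. by move=> Sn; exists S; split => //; exact: subset_hull. Qed.

Lemma rank_leqU1 A p n : rank_leq A n -> rank_leq (p |` A) n.+1.
Proof.
move=> [C [AC Cn]]; exists (p |` C); split; last exact: card_setU1_le.
move=> z [->|/AC]; first by apply: subset_hull; left.
by apply: hull_mono; exact: subsetUr.
Qed.

Lemma has_rank_sub A B n m : A `<=` B -> has_rank L A n -> has_rank L B m -> n <= m.
Proof.
by move=> AB /has_rankP[_ nmin] /has_rankP[Bm _]; exact/nmin/(rank_leq_sub AB Bm).
Qed.

Lemma has_rank_hull A n : has_rank L (hull L A) n <-> has_rank L A n.
Proof. by rewrite !has_rankP; setoid_rewrite rank_leq_hull. Qed.

Lemma has_rank0 : has_rank L set0 0.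
Proof. by apply/has_rankP; split => //; exists set0; split => //; exact: card_ge0. Qed.

Lemma has_rank1 a : has_rank L [set a] 1.
Proof.
apply/has_rankP; split; first exact/rank_leq_card/card_set1_le.
move=> [|//] [C [aC /card_le_I0 C0]].
by move: (aC a erefl); rewrite C0 hull0.
Qed.

Lemma has_rank2 a b : a <> b -> has_rank L (hull L [set a; b]) 2.
Proof.
move=> ab; apply/has_rank_hull/has_rankP; split.
  exact/rank_leq_card/card_setU1_le/card_set1_le.
move=> [|[|//]] [C [abC Cn]].
  by move: (abC a (or_introl erefl)); rewrite (card_le_I0 Cn) hull0.
have [[c Cc]|nC] := pselect (exists c, C c); last first.
  have C0 : C = set0 by apply/seteqP; split => // z Cz; apply: nC; exists z.
  by move: (abC a (or_introl erefl)); rewrite C0 hull0.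
have C1 : C = [set c].
  by apply/seteqP; split=> [z Cz|z ->//]; exact: card_le_I1 Cn Cz Cc.
move: (abC a (or_introl erefl)) (abC b (or_intror erefl)); rewrite C1 hull1 => ac bc.
by case: ab; rewrite ac bc.
Qed.

End Rank.

Section Ranked.
Variables (X : Type) (L : set (set X)).
Hypothesis Hr : ranked L.

Lemma has_rank_hullU1 F k p : flat L F -> has_rank L F k -> ~ F p ->
  has_rank L (hull L (p |` F)) k.+1.
Proof.
move=> fF Fk Fp.
have [m [Fpm mk]] : exists m, has_rank L (hull L (p |` F)) m /\ m <= k.+1.
  by apply/has_rank_leq/rank_leq_hull/rank_leqU1; case/has_rankP: Fk.
have FFp : F `<=` hull L (p |` F) by move=> z Fz; apply: subset_hull; right.
have km := has_rank_sub FFp Fk Fpm.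
have [emk|nmk] := eqVneq m k.
  subst m; exfalso; apply: Fp.
  by rewrite (Hr fF flat_hull FFp Fk Fpm); apply: subset_hull; left.
by have -> : k.+1 = m by move/eqP: nmk; lia.
Qed.

Lemma hull_exchange_finite (S : set X) x y : finite_set S ->
  hull L (x |` S) y -> ~ hull L S y -> hull L (y |` S) x.
Proof.
move=> /finite_set_leP[n Sn] hxy nhy.
have [k [/has_rank_hull Sk _]] := has_rank_leq (rank_leq_card L Sn).
have nx : ~ hull L S x by move=> Sx; apply: nhy; rewrite -(hullU1_id Sx).
have := has_rank_hullU1 flat_hull Sk nx; rewrite hullUr => rx.
have := has_rank_hullU1 flat_hull Sk nhy; rewrite hullUr => ry.
have sub : hull L (y |` S) `<=` hull L (x |` S).
  by apply: hull_sub_hull => z [->//|Sz]; apply: subset_hull; right.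
by rewrite (Hr flat_hull flat_hull sub ry rx); apply: subset_hull; left.
Qed.

Lemma hull_exchange (S : set X) x y :
  hull L (x |` S) y -> ~ hull L S y -> hull L (y |` S) x.
Proof.
move=> hxy nhy; have [F [fF FS hF]] := hull_finitary hxy.
have h1 : hull L (x |` (F `&` S)) y.
  by apply: hull_mono hF => z Fz; have [->|Sz] := FS z Fz; [left|right].
have h2 : ~ hull L (F `&` S) y by move/(hull_mono (@subIsetr _ F S)).
have := hull_exchange_finite (finite_setIl S fF) h1 h2.
by apply: hull_mono => z [->|[_ Sz]]; [left|right].
Qed.

End Ranked.

Lemma ranked_matroid_closure X (L : set (set X)) :
  ranked L -> matroid_closure (hull L).
Proof.
split; [exact: subset_hull|exact: hull_mono|exact: hull_sub_hull|exact: hull_finitary|].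
exact: hull_exchange.
Qed.

Definition no_planes_meet_in_point X (L : set (set X)) :=
  forall P Q : set X, plane L P -> plane L Q -> has_rank L (P `|` Q) 4 ->
    ~ (exists p, P `&` Q = [set p]).

Section WeaklyModular.
Variables (X : Type) (L : set (set X)).
Hypothesis HL : is_liner L.

Lemma flat_meet_line (A : set X) a b : flat L A -> A a -> ~ A b ->
  A `&` hull L [set a; b] = [set a].
Proof.
move=> fA Aa nAb; apply/seteqP; split=> [z [Az hz]|z ->]; last first.
  by split => //; apply: subset_hull; left.
apply: contrapT => /= za.
have ab : a <> b by move=> e; apply: nAb; rewrite -e.
have az : a <> z by move=> e; apply: za; rewrite e.
apply: nAb; apply: (@hull_min _ L [set a; z]) => [//|t [->|->] //|].
by rewrite (hull2_swap HL ab az hz); apply: subset_hull; right.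
Qed.

Lemma weakly_modular_ranked : weakly_modular L -> ranked L.
Proof.
move=> wm A B n fA fB AB An Bn.
apply/seteqP; split => // b Bb; apply: contrapT => nAb.
have [[a Aa]|nA] := pselect (exists a, A a); last first.
  have A0 : A = set0 by apply/seteqP; split => // z Az; apply: nA; exists z.
  subst A; have n0 := has_rank_uniq An (has_rank0 L); subst n.
  case/has_rankP: Bn => [[C [BC /card_le_I0 C0]] _].
  by move: (BC b Bb); rewrite C0 hull0.
have ab : a <> b by move=> e; apply: nAb; rewrite -e.
have [|G1 [G2 [G3 [G4 [g1 g2 g3 g4 e]]]]] := wm A (hull L [set a; b]) fA flat_hull.
  by exists a; split => //; apply: subset_hull; left.
rewrite (flat_meet_line fA Aa nAb) in g1.
have [m [hm mn]] : exists m, has_rank L (A `|` hull L [set a; b]) m /\ m <= n.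
  case/has_rankP: Bn => Bn _; apply/has_rank_leq/(rank_leq_sub _ Bn).
  by move=> z [/AB //|]; apply: hull_min fB _ z => t [->|->] //; exact: AB.
have := dsum_card_eq_nat (min_gen_card (has_rank1 L a) g1) (min_gen_card hm g2)
  (min_gen_card An g3) (min_gen_card (has_rank2 L ab) g4) e.
lia.
Qed.

Lemma weakly_modular_planes : weakly_modular L -> no_planes_meet_in_point L.
Proof.
move=> wm P Q [fP P3] [fQ Q3] PQ [p e].
have [|G1 [G2 [G3 [G4 [g1 g2 g3 g4 ed]]]]] := wm P Q fP fQ; first by exists p; rewrite e.
rewrite e in g1.
by have := dsum_card_eq_nat (min_gen_card (has_rank1 L p) g1) (min_gen_card PQ g2)
  (min_gen_card P3 g3) (min_gen_card Q3 g4) ed.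
Qed.

End WeaklyModular.

Section PlanesWeaklyRegular.
Variables (X : Type) (L : set (set X)).
Hypotheses (HL : is_liner L) (Hr : ranked L).

Lemma has_rank3 a b c : a <> b -> ~ hull L [set a; b] c ->
  has_rank L (hull L [set a; b; c]) 3.
Proof.
move=> ab nc; have := has_rank_hullU1 Hr flat_hull (has_rank2 L ab) nc.
by rewrite hullUr setUC.
Qed.

Lemma plane_hull3 E a b c : flat L E -> has_rank L E 3 -> E a -> E b -> E c ->
  a <> b -> ~ hull L [set a; b] c -> hull L [set a; b; c] = E.
Proof.
move=> fE E3 Ea Eb Ec ab nc; apply: (Hr flat_hull fE _ (has_rank3 ab nc) E3).
by apply: hull_min fE _ => t [[->|->]|->].
Qed.

Hypothesis Hpl : no_planes_meet_in_point L.

Lemma planes_meet_twice P Q a : plane L P -> plane L Q -> P a -> Q a ->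
  ~ Q `<=` P -> rank_leq L (P `|` Q) 4 -> exists2 p, (P `&` Q) p & p <> a.
Proof.
move=> [fP P3] [fQ Q3] Pa Qa nQP /has_rank_leq[m [PQm m4]].
have PPQ : P `<=` P `|` Q by exact: subsetUl.
have [m3|/eqP m_neq3] := eqVneq m 3.
  subst m; case: nQP => t Qt.
  have hPQ3 : has_rank L (hull L (P `|` Q)) 3 by apply/has_rank_hull.
  have PhPQ : P `<=` hull L (P `|` Q) by move=> z /PPQ; exact: subset_hull.
  by rewrite (Hr fP flat_hull PhPQ P3 hPQ3); apply: subset_hull; right.
have m4E : m = 4 by have := has_rank_sub PPQ P3 PQm; lia.
subst m; apply: contrapT => nPQ; apply: (Hpl (conj fP P3) (conj fQ Q3) PQm).
exists a; apply/seteqP; split=> [t PQt|t ->//]; apply: contrapT => ta.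
by apply: nPQ; exists t.
Qed.

Lemma hull4_covered_by_planes A a b x y w : flat L A -> A a -> ~ A b -> A x -> A y ->
  hull L [set a; b; x; y] w -> exists2 z, A z & hull L [set a; b; z] w.
Proof.
move=> fA Aa nAb Ax Ay hw.
have ab : a <> b by move=> e; apply: nAb; rewrite -e.
have [abw|nabw] := pselect (hull L [set a; b] w).
  by exists a => //; apply: hull_mono abw => t /=; tauto.
have [xa|ax] := pselect (x = a).
  by exists y => //; apply: hull_mono hw => t /=; rewrite xa; tauto.
have [axy|naxy] := pselect (hull L [set a; x] y).
  exists x => //; apply: hull_sub_hull hw => t [[[->|->]|->]|->];
    by [|apply: hull_mono axy => u /=; tauto|apply: subset_hull => /=; tauto].
have Pi3 := has_rank3 (nesym ax) naxy.
set Pi := hull L [set a; x; y] in Pi3 *.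
have PiA : Pi `<=` A by apply: hull_min fA _ => t [[->|->]|->].
have E3 := has_rank3 ab nabw.
set E := hull L [set a; b; w] in E3 *.
have [t [Pit Et] ta] : exists2 t, (Pi `&` E) t & t <> a.
  apply: (planes_meet_twice (conj flat_hull Pi3) (conj flat_hull E3)).
- by apply: subset_hull => /=; tauto.
- by apply: subset_hull => /=; tauto.
- move=> EPi; apply: nAb; apply: PiA; apply: EPi.
  by apply: subset_hull; left; right.
- apply: (@rank_leq_sub _ _ _ (hull L [set a; b; x; y])).
    move=> t [Pit|Et]; [apply: hull_sub_hull Pit|apply: hull_sub_hull Et] => u;
      by move=> [[->|->]|->] //; apply: subset_hull => /=; tauto.
  apply/rank_leq_hull/rank_leq_card.
  exact/card_setU1r_le/card_setU1r_le/card_setU1r_le/card_set1_le.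
have nabt : ~ hull L [set a; b] t.
  move=> abt; apply: ta.
  have : (A `&` hull L [set a; b]) t by split => //; exact: PiA.
  by rewrite (flat_meet_line HL fA Aa nAb).
exists t; first exact: PiA.
by rewrite (plane_hull3 flat_hull E3 _ _ Et ab nabt); apply: subset_hull => /=; tauto.
Qed.

Lemma planes_weakly_regular : weakly_regular L.
Proof.
move=> A a b fA Aa nAb; apply/seteqP; split; last first.
  by move=> w [x Ax]; apply: hull_mono => t [[->|->]|->]; [left|right|left].
apply: hull_min => [y z [x Ax hy] [x' Ax' hz] yz w wl|t [At|->]].
- apply: hull4_covered_by_planes fA Aa nAb Ax Ax' _.
  apply: (flat_hull y z _ _ yz w wl); [apply: hull_mono hy|apply: hull_mono hz];
    by move=> t /=; tauto.
- by exists t => //; apply: subset_hull; right.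
- by exists a => //; apply: subset_hull; left; right.
Qed.

End PlanesWeaklyRegular.

Section WeaklyRegularModular.
Variables (X : Type) (L : set (set X)).
Hypotheses (Hr : ranked L) (Hw : weakly_regular L).

Let clP := ranked_matroid_closure Hr.

Lemma independent_min_gen I S : independent (hull L) I -> I `<=` S ->
  S `<=` hull L I -> min_gen L S I.
Proof.
move=> iI IS SI; split => // C SC.
by apply: (independent_card_le clP iI); exact: subset_trans SC.
Qed.

Lemma hull_modular1 A B c b : flat L A -> flat L B -> A c -> B c -> B b ->
  hull L (A `|` [set b]) `&` B `<=` hull L ((A `&` B) `|` [set b]).
Proof.
move=> fA fB Ac Bc Bb y [hy By].
have [Ab|nAb] := pselect (A b).
  have /(_ y hy) Ay : hull L (A `|` [set b]) `<=` A by apply: hull_min fA _ => t [//|->].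
  by apply: subset_hull; left.
move: hy; rewrite (Hw fA Ac nAb) => -[x Ax hx].
have [hcb|nhcb] := pselect (hull L [set c; b] y).
  by apply: hull_mono hcb => t [->|->]; [left|right].
have hx' : hull L (x |` [set c; b]) y by rewrite setUC.
have Bx : B x.
  apply: (@hull_min _ L (y |` [set c; b]) B fB _ x (hull_exchange Hr hx' nhcb)).
  by move=> t [->|[->|->]].
by apply: hull_mono hx => t [[->|->]|->]; [left|right|left].
Qed.

Lemma hull_modular_finite A B c F : flat L A -> flat L B -> A c -> B c ->
  finite_set F -> F `<=` B -> hull L (A `|` F) `&` B `<=` hull L ((A `&` B) `|` F).
Proof.
move=> fA fB Ac Bc; move: F; apply: finite_set_ind.
  by rewrite !setU0 (hull_flatE fA) => _ y [Ay By]; apply: subset_hull.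
move=> F x _ IH xFB y [hy By].
have FB : F `<=` B by move=> t Ft; apply: xFB; right.
have Bx : B x by apply: xFB; left.
have eU S : S `|` (x |` F) = (S `|` F) `|` [set x].
  by rewrite -setUA [F `|` _]setUC.
move: hy; rewrite eU -hullUl => hy.
have AFc : hull L (A `|` F) c by apply: subset_hull; left.
apply: hull_sub_hull (hull_modular1 flat_hull fB AFc Bc Bx (conj hy By)).
move=> t [/(IH FB) ht|->]; last by apply: subset_hull; right; left.
by apply: hull_mono ht; rewrite eU; exact: subsetUl.
Qed.

Lemma hull_modular A B c F : flat L A -> flat L B -> A c -> B c -> F `<=` B ->
  hull L (A `|` F) `&` B `<=` hull L ((A `&` B) `|` F).
Proof.
move=> fA fB Ac Bc FB y [hy By]; have [G [fG GAF hG]] := hull_finitary hy.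
have GF : finite_set (G `&` F) by exact: finite_setIl.
have GFB : G `&` F `<=` B by move=> t [_ /FB].
have hAGF : hull L (A `|` (G `&` F)) y.
  by apply: hull_mono hG => t Gt; case: (GAF t Gt) => [At|Ft]; [left|right].
have := hull_modular_finite fA fB Ac Bc GF GFB (conj hAGF By).
by apply: hull_mono => t [ABt|[_ Ft]]; [left|right].
Qed.

Lemma independent_bases_union A B c G IA IB :
  flat L A -> flat L B -> A c -> B c -> A `&` B `<=` hull L G -> G `<=` IB ->
  IA `<=` A -> IB `<=` B -> independent (hull L) IA -> independent (hull L) IB ->
  independent (hull L) (IA `|` (IB `\` G)).
Proof.
move=> fA fB Ac Bc ABG GIB IAA IBB iIA iIB.
apply: independent_union => // h [IBh nGh] hh.
have DB : (IB `\` G) `\ h `<=` B by move=> t [[/IBB]].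
have hAh : hull L (A `|` ((IB `\` G) `\ h)) h.
  by apply: hull_mono hh => t [/IAA|]; [left|right].
have hABh := hull_modular fA fB Ac Bc DB (conj hAh (IBB h IBh)).
apply: (iIB h IBh); apply: hull_sub_hull hABh => t [/ABG|[[IBt _] th]].
  apply: hull_mono => u Gu; split; first exact: GIB.
  by move=> /= uh; apply: nGh; rewrite -uh.
by apply: subset_hull; split.
Qed.

Lemma weakly_regular_modular : weakly_modular L.
Proof.
move=> A B fA fB [c [Ac Bc]].
have [G [_ GAB iG ABG]] := independent_extend clP (@independent0 _ _) (sub0set (A `&` B)).
have [IA [GIA IAA iIA AIA]] := independent_extend clP iG (fun t Gt => (GAB t Gt).1).
have [IB [GIB IBB iIB BIB]] := independent_extend clP iG (fun t Gt => (GAB t Gt).2).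
have IABG : IA `&` IB `<=` G.
  move=> t [IAt IBt]; apply: (independent_meet_cl clP iIA GIA); split => //.
  by apply: ABG; split; [exact: IAA|exact: IBB].
exists G, (IA `|` (IB `\` G)), IA, IB; split; try exact: independent_min_gen.
- apply: independent_min_gen.
  + exact: independent_bases_union fA fB Ac Bc ABG GIB IAA IBB iIA iIB.
  + by move=> t [/IAA|[/IBB]]; [left|right].
  + move=> t [/AIA|/BIB]; apply: hull_mono => u; first by left.
    by have [/GIA|] := pselect (G u); [left|right].
- exact: dsum_modular.
Qed.

End WeaklyRegularModular.

Theorem theorem5p4p1 (X : Type) (L : set (set X)) :
  is_liner L ->
  (weakly_modular L <-> ranked L /\ weakly_regular L) /\
  (ranked L /\ weakly_regular L <->
     ranked L /\
     (forall P Q : set X, plane L P -> plane L Q ->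
        has_rank L (P `|` Q) 4 ->
        ~ (exists p, P `&` Q = [set p]))).
Proof.
move=> HL; split; split.
- move=> wm; have Hr := weakly_modular_ranked HL wm.
  by split => //; exact: planes_weakly_regular HL Hr (weakly_modular_planes wm).
- by move=> [Hr Hw]; exact: weakly_regular_modular Hr Hw.
- by move=> [Hr Hw]; split => //; exact: weakly_modular_planes (weakly_regular_modular Hr Hw).
- by move=> [Hr Hpl]; split => //; exact: planes_weakly_regular HL Hr Hpl.
Qed.
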